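(* For each $k\in\mathbb N$ let $m_k\in\mathbb N$ with $\lim_{k\to\infty}m_k/k=0$. (a) For every $a>0$ there exist $\epsilon(a)>0$ and $k_0,m_0\in\mathbb N$ such that for all $k\ge k_0$ and all integers $m\in[m_0,m_k]$, $$I\Bigl(j+1,k-j+1;\frac{m-a\sqrt m}{k}\Bigr)\ge\epsilon(a),\qquad j=0,\dots,m-1.$$ (b) For every $\epsilon>0$ there exist $a>0$, $k_0\in\mathbb N$ and $m_0=m_0(a)$ such that for all $k\ge k_0$ and all integers $m\in[m_0,m_k]$, $$I\Bigl(j+1,k-j+1;\frac{m-a\sqrt m}{k}\Bigr)\le\epsilon\,I\Bigl(j+1,k-j+1;\frac mk\Bigr),\qquad j=m,\dots,k.$$
   Context: For $a,b>0$ and $x\in(0,1)$, $I(a,b;x)=\frac{1}{\beta(a,b)}\int_0^x t^{a-1}(1-t)^{b-1}dt$ is the normalized incomplete beta function, where $\beta(a,b)=\int_0^1t^{a-1}(1-t)^{b-1}dt=\frac{\Gamma(a)\Gamma(b)}{\Gamma(a+b)}$. *)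

From Stdlib Require Import Reals.
From Coquelicot Require Import Coquelicot.
Open Scope R_scope.

Definition beta_integrand (a b : nat) (t : R) : R :=
  t ^ (a - 1) * (1 - t) ^ (b - 1).

Definition beta_fn (a b : nat) : R := RInt (beta_integrand a b) 0 1.

Definition incbeta (a b : nat) (x : R) : R :=
  RInt (beta_integrand a b) 0 x / beta_fn a b.

From Stdlib Require Import Reals Lra Lia Psatz FunctionalExtensionality.
From Coquelicot Require Import Coquelicot.
Open Scope R_scope.

(* Write d = k - j and K = j + d = k, so the integrand of I(j+1, d+1; .) is
   G(t) = t^j (1-t)^d, with t (1 - t) G'(t) = (j - K t) G(t); let x = (m - a sqrt m)/K.

   (a) If j < m and m <= K/6, log-concavity of G bounds G on [x, (m + 2 sqrt m)/K]
   by a constant multiple of G on the window [x - sqrt m / K, x]; past that point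
   G decays at relative rate at least K / sqrt m.  So int_0^1 G <= C(a) int_0^x G.

   (b) If j >= m, G increases on [0, m/K] and grows at relative rate at least
   a K / sqrt m on [0, x].  Hence int_0^x G <= G(x) sqrt m / (a K), whereas
   int_x^(m/K) G >= G(x) a sqrt m / K; the ratio of the two bounds is a^-2. *)

Section DerivativeBounds.

Variables f df : R -> R.
Hypothesis f_deriv : forall t, is_derive f t (df t).
Hypothesis df_cont : forall t, continuous df t.

Lemma ex_RInt_C1 p q : ex_RInt f p q.
Proof.
  apply (ex_RInt_continuous (V := R_CompleteNormedModule)); intros t _.
  apply (ex_derive_continuous f); eexists; apply f_deriv.
Qed.

Lemma ex_RInt_deriv p q : ex_RInt df p q.
Proof. apply (ex_RInt_continuous (V := R_CompleteNormedModule)); intros t _; apply df_cont. Qed.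

Lemma RInt_deriv p q : RInt df p q = f q - f p.
Proof.
  apply is_RInt_unique, (is_RInt_derive f); intros t _; [apply f_deriv | apply df_cont].
Qed.

Lemma RInt_le_of_deriv_ge p q c : p <= q -> 0 < c -> 0 <= f p ->
  (forall t, p < t < q -> c * f t <= df t) -> RInt f p q <= f q / c.
Proof.
  intros pq c0 fp0 growth.
  assert (H : RInt f p q <= RInt (fun t => / c * df t) p q).
  { apply RInt_le; [lra | apply ex_RInt_C1 |
      apply (ex_RInt_scal (V := R_NormedModule)), ex_RInt_deriv |].
    intros t ht; specialize (growth t ht).
    apply (Rmult_le_reg_l c); [lra |].
    rewrite <- Rmult_assoc, Rinv_r, Rmult_1_l; lra. }
  change (RInt (fun t => / c * df t) p q) with (RInt (fun t => scal (/ c) (df t)) p q) in H.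
  rewrite (RInt_scal df), RInt_deriv in H by apply ex_RInt_deriv.
  pose proof (Rinv_0_lt_compat c c0); unfold Rdiv; change (scal ?l ?v) with (l * v) in H; nra.
Qed.

Lemma RInt_le_of_deriv_le p q c : p <= q -> 0 < c -> 0 <= f q ->
  (forall t, p < t < q -> df t <= - c * f t) -> RInt f p q <= f p / c.
Proof.
  intros pq c0 fq0 decay.
  assert (H : RInt f p q <= RInt (fun t => - / c * df t) p q).
  { apply RInt_le; [lra | apply ex_RInt_C1 |
      apply (ex_RInt_scal (V := R_NormedModule)), ex_RInt_deriv |].
    intros t ht; specialize (decay t ht).
    apply (Rmult_le_reg_l c); [lra |].
    replace (c * (- / c * df t)) with (- df t) by (field; lra); lra. }
  change (RInt (fun t => - / c * df t) p q) with (RInt (fun t => scal (- / c) (df t)) p q) in H.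
  rewrite (RInt_scal df), RInt_deriv in H by apply ex_RInt_deriv.
  pose proof (Rinv_0_lt_compat c c0); unfold Rdiv; change (scal ?l ?v) with (l * v) in H; nra.
Qed.

Lemma le_of_deriv_nonneg p q : p <= q -> (forall t, p < t < q -> 0 <= df t) -> f p <= f q.
Proof.
  intros pq df0.
  assert (0 <= RInt df p q) by (apply RInt_ge_0; [lra | apply ex_RInt_deriv | exact df0]).
  rewrite RInt_deriv in H; lra.
Qed.

Lemma RInt_ge_of_deriv_nonneg p q : p <= q -> (forall t, p < t < q -> 0 <= df t) ->
  (q - p) * f p <= RInt f p q.
Proof.
  intros pq df0.
  replace ((q - p) * f p) with (RInt (fun _ => f p) p q) by (rewrite RInt_const; reflexivity).
  apply RInt_le; [lra | apply ex_RInt_const | apply ex_RInt_C1 |].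
  intros t ht; apply le_of_deriv_nonneg; [lra |].
  intros u hu; apply df0; lra.
Qed.

End DerivativeBounds.

Lemma RInt_ge_of_ratio_le (f : R -> R) (w x u E : R) : w <= x -> ex_RInt f w x ->
  (forall v, w < v < x -> f u <= E * f v) -> (x - w) * f u <= E * RInt f w x.
Proof.
  intros wx fint ratio.
  replace ((x - w) * f u) with (RInt (fun _ => f u) w x) by (rewrite RInt_const; reflexivity).
  replace (E * RInt f w x) with (RInt (fun v => scal E (f v)) w x)
    by exact (RInt_scal f w x E fint).
  apply RInt_le; [lra | apply ex_RInt_const | apply (ex_RInt_scal (V := R_NormedModule)), fint |].
  exact ratio.
Qed.

Definition beta_kernel (j d : nat) (t : R) : R := t ^ j * (1 - t) ^ d.

(* [pred j] is harmless at [j = 0], where the coefficient [INR j] vanishes *)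
Definition beta_kernel' (j d : nat) (t : R) : R :=
  INR j * t ^ pred j * (1 - t) ^ d - t ^ j * (INR d * (1 - t) ^ pred d).

Lemma is_derive_beta_kernel j d t : is_derive (beta_kernel j d) t (beta_kernel' j d t).
Proof.
  unfold beta_kernel, beta_kernel'; auto_derive; auto.
  unfold Rminus; ring.
Qed.

Lemma continuous_beta_kernel' j d t : continuous (beta_kernel' j d) t.
Proof. apply (ex_derive_continuous (beta_kernel' j d)); unfold beta_kernel'; auto_derive; auto. Qed.

Lemma beta_kernel'_eq j d t :
  t * (1 - t) * beta_kernel' j d t = (INR j - (INR j + INR d) * t) * beta_kernel j d t.
Proof. unfold beta_kernel', beta_kernel; destruct j, d; simpl pred; simpl; ring. Qed.

Lemma beta_kernel_ge0 j d t : 0 <= t <= 1 -> 0 <= beta_kernel j d t.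
Proof. intros; unfold beta_kernel; apply Rmult_le_pos; apply pow_le; lra. Qed.

Lemma beta_kernel_gt0 j d t : 0 < t < 1 -> 0 < beta_kernel j d t.
Proof. intros; unfold beta_kernel; apply Rmult_lt_0_compat; apply pow_lt; lra. Qed.

Lemma ex_RInt_beta_kernel j d p q : ex_RInt (beta_kernel j d) p q.
Proof. exact (ex_RInt_C1 _ _ (is_derive_beta_kernel j d) p q). Qed.

Lemma RInt_beta_kernel_ge0 j d p q : 0 <= p <= q -> q <= 1 -> 0 <= RInt (beta_kernel j d) p q.
Proof.
  intros; apply RInt_ge_0; [lra | apply ex_RInt_beta_kernel | intros; apply beta_kernel_ge0; lra].
Qed.

Lemma RInt_beta_kernel_gt0 j d p q : 0 <= p < q -> q <= 1 -> 0 < RInt (beta_kernel j d) p q.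
Proof.
  intros; apply RInt_gt_0; [lra | intros; apply beta_kernel_gt0; lra |].
  intros t _; apply (ex_derive_continuous (beta_kernel j d)).
  eexists; apply is_derive_beta_kernel.
Qed.

Lemma beta_kernel'_ge j d t c : 0 < t < 1 ->
  c * (t * (1 - t)) <= INR j - (INR j + INR d) * t -> c * beta_kernel j d t <= beta_kernel' j d t.
Proof.
  intros Ht Hc; apply (Rmult_le_reg_l (t * (1 - t))); [nra |].
  rewrite beta_kernel'_eq; pose proof (beta_kernel_ge0 j d t ltac:(lra)); nra.
Qed.

Lemma beta_kernel'_le j d t c : 0 < t < 1 ->
  INR j - (INR j + INR d) * t <= c * (t * (1 - t)) -> beta_kernel' j d t <= c * beta_kernel j d t.
Proof.
  intros Ht Hc; apply (Rmult_le_reg_l (t * (1 - t))); [nra |].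
  rewrite beta_kernel'_eq; pose proof (beta_kernel_ge0 j d t ltac:(lra)); nra.
Qed.

Lemma pow_le_exp z n : 0 <= 1 + z -> (1 + z) ^ n <= exp (INR n * z).
Proof.
  intros Hz; induction n as [| n IH].
  - simpl; rewrite Rmult_0_l, exp_0; lra.
  - rewrite S_INR, Rmult_plus_distr_r, Rmult_1_l, exp_plus; simpl.
    rewrite Rmult_comm; apply Rmult_le_compat; [apply pow_le | | exact IH | apply exp_ineq1_le]; lra.
Qed.

(* log G is concave, so it lies below its tangent line at v *)
Lemma beta_kernel_le_tangent j d u v : 0 <= u <= 1 -> 0 < v < 1 ->
  beta_kernel j d u <=
  beta_kernel j d v * exp ((u - v) * (INR j - (INR j + INR d) * v) / (v * (1 - v))).
Proof.
  intros Hu Hv.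
  set (z := (u - v) / v); set (z' := - (u - v) / (1 - v)).
  assert (Hsplit : beta_kernel j d u = beta_kernel j d v * ((1 + z) ^ j * (1 + z') ^ d)).
  { unfold beta_kernel.
    replace u with (v * (1 + z)) at 1 by (unfold z; field; lra).
    replace (1 - u) with ((1 - v) * (1 + z')) by (unfold z'; field; lra).
    rewrite !Rpow_mult_distr; ring. }
  replace ((u - v) * (INR j - (INR j + INR d) * v) / (v * (1 - v))) with (INR j * z + INR d * z')
    by (unfold z, z'; field; lra).
  assert (Hz : 0 <= 1 + z) by (unfold z; apply (Rmult_le_reg_l v); [lra |]; field_simplify; lra).
  assert (Hz' : 0 <= 1 + z') by (unfold z'; apply (Rmult_le_reg_l (1 - v)); [lra |]; field_simplify; lra).
  rewrite Hsplit, exp_plus; apply Rmult_le_compat_l; [apply beta_kernel_ge0; lra |].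
  apply Rmult_le_compat; [apply pow_le; lra | apply pow_le; lra | |]; apply pow_le_exp; assumption.
Qed.

Lemma RInt_beta_kernel_Chasles j d p q r :
  RInt (beta_kernel j d) p q + RInt (beta_kernel j d) q r = RInt (beta_kernel j d) p r.
Proof. apply (RInt_Chasles (beta_kernel j d)); apply ex_RInt_beta_kernel. Qed.

Lemma RInt_beta_kernel_shift_le j d K m s a :
  K = INR j + INR d -> s * s = m -> 0 < a -> a <= s -> m <= INR j ->
  RInt (beta_kernel j d) 0 ((m - a * s) / K) <= / (a * a) * RInt (beta_kernel j d) 0 (m / K).
Proof.
  intros HK Hm Ha Has HmJ.
  pose proof (pos_INR d) as Hd.
  assert (HK0 : 0 < K) by nra.
  set (x := (m - a * s) / K); set (y := m / K); set (c := a * K / s).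
  assert (Kx : K * x = m - a * s) by (unfold x; field; lra).
  assert (Ky : K * y = m) by (unfold y; field; lra).
  assert (cx : c * x = a * s - a * a) by (unfold c, x; rewrite <- Hm; field; lra).
  assert (Hc : 0 < c) by (unfold c; apply Rdiv_lt_0_compat; nra).
  assert (Hx : 0 <= x <= y) by nra.
  assert (Hy : y <= 1) by nra.
  assert (growth : RInt (beta_kernel j d) 0 x <= beta_kernel j d x / c).
  { apply (RInt_le_of_deriv_ge _ _ (is_derive_beta_kernel j d) (continuous_beta_kernel' j d));
      [lra | exact Hc | apply beta_kernel_ge0; lra |].
    intros t Ht; apply beta_kernel'_ge; [lra |].
    assert (c * (t * (1 - t)) <= c * x) by (apply Rmult_le_compat_l; nra).
    nra. }
  assert (mono : (y - x) * beta_kernel j d x <= RInt (beta_kernel j d) x y).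
  { apply (RInt_ge_of_deriv_nonneg _ _ (is_derive_beta_kernel j d) (continuous_beta_kernel' j d));
      [lra |].
    intros t Ht; rewrite <- (Rmult_0_l (beta_kernel j d t)); apply beta_kernel'_ge; nra. }
  assert (Hcy : / c = (y - x) / (a * a)) by (unfold c, x, y; field; repeat split; lra).
  rewrite <- (RInt_beta_kernel_Chasles j d 0 x y).
  pose proof (RInt_beta_kernel_ge0 j d 0 x ltac:(lra) ltac:(lra)).
  pose proof (beta_kernel_ge0 j d x ltac:(lra)).
  assert (0 < / (a * a)) by (apply Rinv_0_lt_compat; nra).
  unfold Rdiv in growth, Hcy; rewrite Rmult_comm, Hcy in growth.
  nra.
Qed.

Lemma beta_kernel_ratio_le j d K s a u v :
  K = INR j + INR d -> 0 < a -> 2 * (a + 1) <= s -> INR j <= s * s ->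
  s * s - (a + 1) * s <= K * v -> v <= u -> K * u <= s * s + 2 * s -> u <= 1 / 2 ->
  beta_kernel j d u <= exp (4 * (a + 1) * (a + 3)) * beta_kernel j d v.
Proof.
  intros HK Ha Hs HjS Hv Hvu Hu Hu2.
  pose proof (pos_INR j); pose proof (pos_INR d).
  assert (HKv : s * s <= 2 * (K * v)) by nra.
  assert (HK0 : 0 < K) by nra.
  assert (Hv0 : 0 < v) by nra.
  assert (exponent :
    (u - v) * (INR j - (INR j + INR d) * v) / (v * (1 - v)) <= 4 * (a + 1) * (a + 3)).
  { rewrite <- HK; apply (Rmult_le_reg_l (K * (v * (1 - v)))); [nra |].
    replace (K * (v * (1 - v)) * ((u - v) * (INR j - K * v) / (v * (1 - v))))
      with ((K * (u - v)) * (INR j - K * v)) by (field; lra).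
    assert (Hspread : K * (u - v) <= (a + 3) * s) by nra.
    assert (Hlog : INR j - K * v <= (a + 1) * s) by nra.
    assert (Hwidth : s * s <= 4 * (K * (v * (1 - v)))) by nra.
    assert (Hab : 0 < (a + 1) * (a + 3)) by nra.
    assert (s * s * ((a + 1) * (a + 3)) <= 4 * (K * (v * (1 - v))) * ((a + 1) * (a + 3)))
      by (apply Rmult_le_compat_r; lra).
    assert (0 <= K * (u - v)) by nra.
    destruct (Rle_or_lt (INR j - K * v) 0) as [Hneg | Hpos].
    - assert (K * (u - v) * (INR j - K * v) <= 0) by nra; nra.
    - assert (K * (u - v) * (INR j - K * v) <= (a + 3) * s * ((a + 1) * s))
        by (apply Rmult_le_compat; lra).
      nra. }
  rewrite (Rmult_comm (exp _)).
  eapply Rle_trans; [apply (beta_kernel_le_tangent j d u v); lra |].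
  apply Rmult_le_compat_l; [apply beta_kernel_ge0; lra |].
  destruct exponent as [Hlt | ->]; [left; apply exp_increasing, Hlt | lra].
Qed.

Lemma RInt_beta_kernel_tail_le j d K s p :
  K = INR j + INR d -> 2 <= s -> INR j <= s * s -> s * s + 2 * s <= K * p -> p <= 1 ->
  RInt (beta_kernel j d) p 1 <= s / K * beta_kernel j d p.
Proof.
  intros HK Hs HjS Hp Hp1.
  pose proof (pos_INR j); pose proof (pos_INR d).
  assert (HK0 : 0 < K) by nra.
  assert (Hp0 : 0 < p) by nra.
  replace (s / K * beta_kernel j d p) with (beta_kernel j d p / (K / s)) by (field; lra).
  apply (RInt_le_of_deriv_le _ _ (is_derive_beta_kernel j d) (continuous_beta_kernel' j d));
    [lra | apply Rdiv_lt_0_compat; lra | apply beta_kernel_ge0; lra |].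
  intros t Ht; apply beta_kernel'_le; [lra |].
  rewrite <- HK; apply (Rmult_le_reg_l s); [lra |].
  replace (s * (- (K / s) * (t * (1 - t)))) with (- (K * t * (1 - t))) by (field; lra).
  assert (Hkt : s * s + 2 * s <= K * t) by nra.
  assert (K * t * (1 - t) <= K * t) by nra.
  nra.
Qed.

Lemma RInt_beta_kernel_shift_ge j d K m s a :
  K = INR j + INR d -> s * s = m -> 0 < a -> 2 * (a + 1) <= s -> INR j <= m -> 6 * m <= K ->
  RInt (beta_kernel j d) 0 1 <=
  (1 + (a + 3) * exp (4 * (a + 1) * (a + 3))) * RInt (beta_kernel j d) 0 ((m - a * s) / K).
Proof.
  intros HK Hm Ha Hs HjS HK6; subst m.
  assert (HK0 : 0 < K) by nra.
  pose proof (exp_pos (4 * (a + 1) * (a + 3))) as HE; set (E := exp (4 * (a + 1) * (a + 3))) in *.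
  set (w := (s * s - (a + 1) * s) / K); set (x := (s * s - a * s) / K).
  set (r := (s * s + 2 * s) / K); set (h := s / K).
  assert (Kw : K * w = s * s - (a + 1) * s) by (unfold w; field; lra).
  assert (Kx : K * x = s * s - a * s) by (unfold x; field; lra).
  assert (Kr : K * r = s * s + 2 * s) by (unfold r; field; lra).
  assert (Kh : K * h = s) by (unfold h; field; lra).
  assert (Hxw : x - w = h) by (apply (Rmult_eq_reg_l K); nra).
  assert (Hrx : r - x = (a + 2) * h) by (apply (Rmult_eq_reg_l K); nra).
  assert (Hw : 0 < w) by nra.
  assert (Hr : r <= 1 / 2) by nra.
  assert (Hh : 0 < h) by nra.
  assert (Hxr : x <= r) by nra.
  set (I := RInt (beta_kernel j d) w x).
  assert (ratio : forall u, x <= u <= r -> h * beta_kernel j d u <= E * I).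
  { intros u Hu; rewrite <- Hxw.
    apply RInt_ge_of_ratio_le; [lra | apply ex_RInt_beta_kernel |].
    intros v Hv; apply (beta_kernel_ratio_le j d K s a); nra. }
  assert (middle : RInt (beta_kernel j d) x r <= (a + 2) * E * I).
  { apply Rle_trans with (RInt (fun _ => E * I / h) x r).
    - apply RInt_le; [lra | apply ex_RInt_beta_kernel | apply ex_RInt_const |].
      intros u Hu; apply (Rmult_le_reg_l h); [lra |].
      replace (h * (E * I / h)) with (E * I) by (field; lra); apply ratio; lra.
    - rewrite RInt_const, Hrx; change (scal ?l ?y) with (l * y).
      replace ((a + 2) * h * (E * I / h)) with ((a + 2) * E * I) by (field; lra); lra. }
  assert (tail : RInt (beta_kernel j d) r 1 <= E * I).
  { apply Rle_trans with (h * beta_kernel j d r); [| apply ratio; nra].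
    apply (RInt_beta_kernel_tail_le j d K s r); nra. }
  pose proof (RInt_beta_kernel_Chasles j d 0 w x) as C1.
  pose proof (RInt_beta_kernel_Chasles j d 0 x r) as C2.
  pose proof (RInt_beta_kernel_Chasles j d 0 r 1) as C3.
  pose proof (RInt_beta_kernel_ge0 j d 0 w ltac:(lra) ltac:(lra)).
  assert (0 <= (a + 3) * E * RInt (beta_kernel j d) 0 w) by (apply Rmult_le_pos; nra).
  fold x; rewrite <- C3, <- C2, <- C1; fold I.
  nra.
Qed.

Lemma incbeta_beta_kernel j k x :
  incbeta (j + 1) (k - j + 1) x = RInt (beta_kernel j (k - j)) 0 x / RInt (beta_kernel j (k - j)) 0 1.
Proof.
  unfold incbeta, beta_fn.
  replace (beta_integrand (j + 1) (k - j + 1)) with (beta_kernel j (k - j)); [reflexivity |].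
  apply functional_extensionality; intro t; unfold beta_integrand, beta_kernel.
  now rewrite !Nat.add_sub.
Qed.

Lemma INR_eventually_ge (b : R) : exists n : nat, forall m : nat, (n <= m)%nat -> b <= INR m.
Proof.
  destruct (INR_unbounded b) as [n Hn]; exists n; intros m Hm.
  apply le_INR in Hm; lra.
Qed.

Lemma is_lim_seq_ratio_eventually_lt (u : nat -> nat) (c : R) :
  is_lim_seq (fun k => INR (u k) / INR k) 0 -> 0 < c ->
  exists k0 : nat, forall k : nat, (k0 <= k)%nat -> 0 < INR k /\ INR (u k) < c * INR k.
Proof.
  intros Hu Hc; apply is_lim_seq_Reals in Hu; destruct (Hu c Hc) as [N HN].
  exists (max N 1); intros k Hk.
  assert (Hk0 : 0 < INR k) by (apply lt_0_INR; lia).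
  specialize (HN k ltac:(lia)); unfold R_dist in HN; rewrite Rminus_0_r in HN.
  apply Rabs_def2 in HN; destruct HN as [HN _].
  split; [exact Hk0 |].
  apply (Rmult_lt_compat_r (INR k)) in HN; [| exact Hk0].
  unfold Rdiv in HN; rewrite Rmult_assoc, Rinv_l, Rmult_1_r in HN; lra.
Qed.

Lemma le_sqrt_of_sqr_le (m b : R) : 0 <= b -> b * b <= m -> b <= sqrt m.
Proof. intros Hb Hm; rewrite <- (sqrt_square b) by exact Hb; apply sqrt_le_1_alt, Hm. Qed.

Lemma incbeta_shift_lower_bound (mk : nat -> nat) :
  is_lim_seq (fun k => INR (mk k) / INR k) 0 ->
  forall a : R, 0 < a ->
  exists eps : R, 0 < eps /\
  exists k0 m0 : nat,
    forall k m : nat, (k0 <= k)%nat -> (m0 <= m)%nat -> (m <= mk k)%nat ->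
    forall j : nat, (j < m)%nat ->
      incbeta (j + 1) (k - j + 1) ((INR m - a * sqrt (INR m)) / INR k) >= eps.
Proof.
  intros hmk a Ha.
  set (C := 1 + (a + 3) * exp (4 * (a + 1) * (a + 3))).
  assert (HC : 0 < C) by (unfold C; pose proof (exp_pos (4 * (a + 1) * (a + 3))); nra).
  exists (/ C); split; [apply Rinv_0_lt_compat, HC |].
  destruct (is_lim_seq_ratio_eventually_lt mk (/ 6) hmk ltac:(lra)) as [k0 Hk0].
  destruct (INR_eventually_ge ((2 * (a + 1)) * (2 * (a + 1)))) as [m0 Hm0].
  exists k0, m0; intros k m Hk Hm Hmk j Hj.
  destruct (Hk0 k Hk) as [HK0 HKm]; apply le_INR in Hmk.
  assert (Hs : 2 * (a + 1) <= sqrt (INR m)) by (apply le_sqrt_of_sqr_le; [lra | apply Hm0, Hm]).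
  assert (Hss : sqrt (INR m) * sqrt (INR m) = INR m) by (apply sqrt_sqrt, pos_INR).
  assert (Hjk : (j <= k)%nat) by (apply INR_le; apply lt_INR in Hj; lra).
  assert (HK : INR k = INR j + INR (k - j)) by (rewrite minus_INR by exact Hjk; ring).
  pose proof (RInt_beta_kernel_shift_ge j (k - j) (INR k) (INR m) (sqrt (INR m)) a HK Hss Ha Hs
    ltac:(apply lt_INR in Hj; lra) ltac:(lra)) as Hbound; fold C in Hbound.
  pose proof (RInt_beta_kernel_gt0 j (k - j) 0 1 ltac:(lra) ltac:(lra)) as HB.
  rewrite incbeta_beta_kernel; apply Rle_ge.
  apply (Rmult_le_reg_l C); [exact HC |].
  rewrite Rinv_r by lra; unfold Rdiv; rewrite <- Rmult_assoc.
  apply (Rmult_le_reg_r (RInt (beta_kernel j (k - j)) 0 1)); [exact HB |].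
  rewrite Rmult_assoc, Rinv_l, Rmult_1_r, Rmult_1_l by lra; exact Hbound.
Qed.

Lemma incbeta_shift_ratio_bound (eps : R) : 0 < eps ->
  exists a : R, 0 < a /\
  exists m0 : nat,
    forall k m j : nat, (m0 <= m)%nat -> (m <= j <= k)%nat ->
      incbeta (j + 1) (k - j + 1) ((INR m - a * sqrt (INR m)) / INR k)
      <= eps * incbeta (j + 1) (k - j + 1) (INR m / INR k).
Proof.
  intros Heps.
  assert (Hse : 0 < sqrt eps) by (apply sqrt_lt_R0, Heps).
  assert (Ha : 0 < / sqrt eps) by (apply Rinv_0_lt_compat, Hse).
  exists (/ sqrt eps); split; [exact Ha |].
  assert (Haa : / (/ sqrt eps * / sqrt eps) = eps)
    by (rewrite <- Rinv_mult, Rinv_inv; apply sqrt_sqrt; lra).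
  destruct (INR_eventually_ge (/ sqrt eps * / sqrt eps)) as [m0 Hm0].
  exists m0; intros k m j Hm Hj.
  assert (Has : / sqrt eps <= sqrt (INR m)) by (apply le_sqrt_of_sqr_le; [lra | apply Hm0, Hm]).
  assert (Hss : sqrt (INR m) * sqrt (INR m) = INR m) by (apply sqrt_sqrt, pos_INR).
  assert (HK : INR k = INR j + INR (k - j)) by (rewrite minus_INR by lia; ring).
  pose proof (RInt_beta_kernel_shift_le j (k - j) (INR k) (INR m) (sqrt (INR m)) (/ sqrt eps)
    HK Hss Ha Has ltac:(apply le_INR; lia)) as Hbound.
  rewrite Haa in Hbound.
  pose proof (RInt_beta_kernel_gt0 j (k - j) 0 1 ltac:(lra) ltac:(lra)) as HB.
  rewrite !incbeta_beta_kernel; unfold Rdiv; rewrite <- Rmult_assoc.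
  apply Rmult_le_compat_r; [left; apply Rinv_0_lt_compat, HB | exact Hbound].
Qed.

Theorem lemma3p2 (mk : nat -> nat)
  (hmk : is_lim_seq (fun k => INR (mk k) / INR k) 0) :
  (forall a : R, 0 < a ->
     exists eps : R, 0 < eps /\
     exists k0 m0 : nat,
       forall k m : nat, (k0 <= k)%nat -> (m0 <= m)%nat -> (m <= mk k)%nat ->
       forall j : nat, (j < m)%nat ->
         incbeta (j + 1) (k - j + 1) ((INR m - a * sqrt (INR m)) / INR k) >= eps)
  /\
  (forall eps : R, 0 < eps ->
     exists a : R, 0 < a /\
     exists k0 m0 : nat,
       forall k m : nat, (k0 <= k)%nat -> (m0 <= m)%nat -> (m <= mk k)%nat ->
       forall j : nat, (m <= j <= k)%nat ->
         incbeta (j + 1) (k - j + 1) ((INR m - a * sqrt (INR m)) / INR k)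
         <= eps * incbeta (j + 1) (k - j + 1) (INR m / INR k)).
Proof.
  split; [exact (incbeta_shift_lower_bound mk hmk) |].
  intros eps Heps.
  destruct (incbeta_shift_ratio_bound eps Heps) as [a [Ha [m0 Hbound]]].
  exists a; split; [exact Ha |]; exists 0%nat, m0.
  intros k m _ Hm _ j Hj; exact (Hbound k m j Hm Hj).
Qed.
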